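(* For each integer $n\geq 3$, the variety $\mathbb{X}$ of $n$-solvable groups (groups whose derived series reaches the trivial group in at most $n$ steps) is action accessible and admits normalizers, but is not weakly action representable.
   Context: A split extension with kernel $X$ is a diagram $X\xrightarrow{\kappa}A\underset{\beta}{\overset{\alpha}{\rightleftarrows}}B$ with $\kappa$ the kernel of $\alpha$ and $\alpha\beta=1_B$; morphisms of split extensions with kernel $X$ are triples of morphisms commuting with all structure maps and equal to $1_X$ on kernels. A split extension with kernel $X$ is faithful if every split extension with kernel $X$ admits at most one morphism into it; the category is action accessible if every split extension with kernel $X$ admits a morphism into a faithful one, for every $X$. The category admits normalizers if every monomorphism $f:W\to X$ has a universal factorization $f=mn$ with $n$ a normal monomorphism and $m$ a monomorphism (terminal among such factorizations). For an object $X$, $\mathrm{SplExt}(-,X)$ is the functor sending $B$ to the set of isomorphism classes of split extensions of $B$ with kernel $X$, acting on morphisms by pullback; the category is weakly action representable if for each $X$ there is an object $M$ and a monomorphism of functors $\mathrm{SplExt}(-,X)\to\hom(-,M)$. *)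

Set Implicit Arguments.
Unset Strict Implicit.

Record group := Group {
  gcar :> Type;
  gmul : gcar -> gcar -> gcar;
  gone : gcar;
  ginv : gcar -> gcar;
  gassoc : forall x y z, gmul x (gmul y z) = gmul (gmul x y) z;
  gmul1 : forall x, gmul gone x = x;
  gmulV : forall x, gmul (ginv x) x = gone }.

Arguments gmul {g} _ _.
Arguments gone {g}.
Arguments ginv {g} _.

Inductive gen (G : group) (S : G -> Prop) : G -> Prop :=
| gen_in : forall x, S x -> gen S x
| gen_one : gen S gone
| gen_mul : forall x y, gen S x -> gen S y -> gen S (gmul x y)
| gen_inv : forall x, gen S x -> gen S (ginv x).

Definition comm (G : group) (x y : G) : G :=
  gmul (gmul (ginv x) (ginv y)) (gmul x y).

Fixpoint derived (G : group) (k : nat) : G -> Prop :=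
  match k with
  | O => fun _ => True
  | Datatypes.S k => @gen G (fun z : G => exists x y : G,
                     @derived G k x /\ @derived G k y /\ z = @comm G x y)
  end.

Definition n_solvable (n : nat) (G : group) : Prop :=
  forall x : G, @derived G n x -> x = gone.

Record hom (G H : group) := Hom {
  hfun :> G -> H;
  hmulP : forall x y, hfun (gmul x y) = gmul (hfun x) (hfun y) }.

Definition hcomp (G H K : group) (g : hom H K) (f : hom G H) : hom G K.
Proof.
  refine (@Hom G K (fun x => g (f x)) _).
  intros x y; rewrite (hmulP f), (hmulP g); reflexivity.
Defined.

Definition hid (G : group) : hom G G.
Proof. refine (@Hom G G (fun x => x) _). reflexivity. Defined.

Definition hzero (G H : group) : hom G H.
Proof. refine (@Hom G H (fun _ => gone) _). intros; rewrite gmul1; reflexivity. Defined.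

Definition heq (G H : group) (f g : hom G H) : Prop := forall x, f x = g x.

Record obj (n : nat) := Obj { ogrp :> group; osolv : n_solvable n ogrp }.

Definition is_mono (n : nat) (W Y : obj n) (f : hom W Y) : Prop :=
  forall (T : obj n) (g h : hom T W), heq (hcomp f g) (hcomp f h) -> heq g h.

Definition is_kernel (n : nat) (K A B : obj n) (k : hom K A) (p : hom A B) : Prop :=
  heq (hcomp p k) (hzero K B) /\
  forall (T : obj n) (g : hom T A), heq (hcomp p g) (hzero T B) ->
    exists w : hom T K, heq (hcomp k w) g /\
      forall w' : hom T K, heq (hcomp k w') g -> heq w' w.

Definition is_normal_mono (n : nat) (W Y : obj n) (f : hom W Y) : Prop :=
  exists (Z : obj n) (p : hom Y Z), is_kernel f p.

Definition admits_normalizers (n : nat) : Prop :=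
  forall (W Y : obj n) (f : hom W Y), is_mono f ->
    exists (N : obj n) (nn : hom W N) (m : hom N Y),
      is_normal_mono nn /\ is_mono m /\ heq (hcomp m nn) f /\
      forall (N' : obj n) (nn' : hom W N') (m' : hom N' Y),
        is_normal_mono nn' -> is_mono m' -> heq (hcomp m' nn') f ->
        exists u : hom N' N, heq (hcomp u nn') nn /\ heq (hcomp m u) m' /\
          forall u' : hom N' N, heq (hcomp u' nn') nn -> heq (hcomp m u') m' -> heq u' u.

Record splext (n : nat) (X B : obj n) := SplExt {
  sA : obj n;
  sk : hom X sA;
  sa : hom sA B;
  sb : hom B sA;
  sk_ker : is_kernel sk sa;
  sab : heq (hcomp sa sb) (hid B) }.

Arguments sA {n X B} _.
Arguments sk {n X B} _.
Arguments sa {n X B} _.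
Arguments sb {n X B} _.

Record splmor (n : nat) (X B B' : obj n) (E : splext X B) (E' : splext X B') := SplMor {
  mA : hom (sA E) (sA E');
  mB : hom B B';
  mk : heq (hcomp mA (sk E)) (sk E');
  ma : heq (hcomp (sa E') mA) (hcomp mB (sa E));
  mb : heq (hcomp mA (sb E)) (hcomp (sb E') mB) }.

Definition faithful_splext (n : nat) (X B' : obj n) (E' : splext X B') : Prop :=
  forall (B : obj n) (E : splext X B) (f g : splmor E E'),
    heq (mA f) (mA g) /\ heq (mB f) (mB g).

Definition action_accessible (n : nat) : Prop :=
  forall (X B : obj n) (E : splext X B),
    exists (B' : obj n) (E' : splext X B'), faithful_splext E' /\ inhabited (splmor E E').

Definition splext_iso (n : nat) (X B : obj n) (E E' : splext X B) : Prop :=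
  exists (u : hom (sA E) (sA E')) (v : hom (sA E') (sA E)),
    heq (hcomp v u) (hid _) /\ heq (hcomp u v) (hid _) /\
    heq (hcomp u (sk E)) (sk E') /\ heq (hcomp (sa E') u) (sa E) /\
    heq (hcomp u (sb E)) (sb E').

(* E' is (a representative of) the pullback f^* E of E along f : B' -> B:
   A' together with g : A' -> A is a pullback of a : A -> B along f in X,
   with the induced kernel and section. *)
Definition is_pullback_splext (n : nat) (X B B' : obj n) (f : hom B' B)
    (E : splext X B) (E' : splext X B') : Prop :=
  exists g : hom (sA E') (sA E),
    heq (hcomp (sa E) g) (hcomp f (sa E')) /\
    heq (hcomp g (sk E')) (sk E) /\
    heq (hcomp g (sb E')) (hcomp (sb E) f) /\
    forall (T : obj n) (u : hom T (sA E)) (v : hom T B'),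
      heq (hcomp (sa E) u) (hcomp f v) ->
      exists w : hom T (sA E'),
        heq (hcomp g w) u /\ heq (hcomp (sa E') w) v /\
        forall w' : hom T (sA E'), heq (hcomp g w') u -> heq (hcomp (sa E') w') v ->
          heq w' w.

(* A monomorphism (componentwise injective natural transformation)
   SplExt(-,X) -> hom(-,M), given on representatives: tau must be
   constant on isomorphism classes, injective on them, and natural
   w.r.t. pullback. *)
Definition weakly_action_representable (n : nat) : Prop :=
  forall X : obj n, exists (M : obj n) (tau : forall B : obj n, splext X B -> hom B M),
    (forall (B : obj n) (E E' : splext X B), splext_iso E E' -> heq (tau B E) (tau B E')) /\
    (forall (B : obj n) (E E' : splext X B), heq (tau B E) (tau B E') -> splext_iso E E') /\
    (forall (B B' : obj n) (f : hom B' B) (E : splext X B) (E' : splext X B'),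
        is_pullback_splext f E E' -> heq (tau B' E') (hcomp (tau B E) f)).

From Stdlib Require Import FunctionalExtensionality ProofIrrelevance PropExtensionality
  ClassicalEpsilon FinFun Arith Lia Bool.

(* A split extension E of B by X carries the conjugation action of B on X, and morphisms
   of split extensions are equivariant for these actions.  Hence into an extension whose
   action is faithful there is at most one morphism: its B-component is pinned down by the
   action, and then its A-component by A = X B.  Every E maps to such an extension, the
   semidirect product of X with the image of B in the maps X -> X.

   For a mono f : W -> Y, the normalizer of f(W) in Y contains f(W) as a normal subgroup,
   hence as the kernel of the quotient map; it is terminal among factorizations of f into
   a normal mono followed by a mono, because normal monos have conjugation-closed images.

   Against weak action representability take V = F_2^N with the transvection actions t_ij
   of C_2.  The Heisenberg group of order 8 acts on V with generators a, b and c = [a, b]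
   acting as t_ij, t_jk and t_ik, and its semidirect product with V is 3-solvable (this is
   where n >= 3 is used).  Pulling back along the three embeddings C_2 -> Heis, naturality
   forces the classifying elements v_ij of M to satisfy v_ik = [v_ij, v_jk].  So v_{0,2^n}
   lies in the n-th derived subgroup of M, which is trivial; the extension by t_{0,2^n}
   then has the classifying map of the trivial extension, hence the trivial action. *)

(** * Groups *)

Lemma gmul_inv_r {G : group} (x : G) : gmul x (ginv x) = gone.
Proof.
  rewrite <- (gmul1 (gmul x (ginv x))), <- (gmulV (ginv x)) at 1.
  rewrite <- gassoc, (gassoc (ginv x) x (ginv x)), gmulV, gmul1. apply gmulV.
Qed.

Lemma gmul_one_r {G : group} (x : G) : gmul x gone = x.
Proof. rewrite <- (gmulV x), gassoc, gmul_inv_r. apply gmul1. Qed.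

Lemma gmul_cancel_l {G : group} (a x y : G) : gmul a x = gmul a y -> x = y.
Proof.
  intro H. rewrite <- (gmul1 x), <- (gmul1 y), <- (gmulV a), <- !gassoc, H. reflexivity.
Qed.

Lemma ginv_unique {G : group} (x y : G) : gmul x y = gone -> ginv x = y.
Proof. intro H. apply (gmul_cancel_l x). rewrite gmul_inv_r. auto. Qed.

Lemma ginvK {G : group} (x : G) : ginv (ginv x) = x.
Proof. apply ginv_unique, gmulV. Qed.

Lemma ginv_one {G : group} : ginv (@gone G) = gone.
Proof. apply ginv_unique, gmul1. Qed.

Lemma ginv_mul {G : group} (x y : G) : ginv (gmul x y) = gmul (ginv y) (ginv x).
Proof.
  apply ginv_unique.
  rewrite <- gassoc, (gassoc y (ginv y)), gmul_inv_r, gmul1. apply gmul_inv_r.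
Qed.

Lemma gmulK {G : group} (x y : G) : gmul (ginv x) (gmul x y) = y.
Proof. rewrite gassoc, gmulV. apply gmul1. Qed.

Lemma gmulKV {G : group} (x y : G) : gmul x (gmul (ginv x) y) = y.
Proof. rewrite gassoc, gmul_inv_r. apply gmul1. Qed.

Ltac gsimpl := repeat progress (rewrite ?ginv_mul, ?ginvK, ?ginv_one, <- ?gassoc,
  ?gmulV, ?gmul_inv_r, ?gmul1, ?gmul_one_r, ?gmulK, ?gmulKV).
Ltac gsimpl_in H := repeat progress (rewrite ?ginv_mul, ?ginvK, ?ginv_one, <- ?gassoc,
  ?gmulV, ?gmul_inv_r, ?gmul1, ?gmul_one_r, ?gmulK, ?gmulKV in H).

Definition abelian (G : group) : Prop := forall x y : G, gmul x y = gmul y x.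

Lemma comm_trivial {G : group} (x y : G) : gmul x y = gmul y x -> comm x y = gone.
Proof. intro H. unfold comm. rewrite H. gsimpl. reflexivity. Qed.

Definition gconj {G : group} (g x : G) : G := gmul (gmul g x) (ginv g).

Lemma gconj_mul {G : group} (g x y : G) : gconj g (gmul x y) = gmul (gconj g x) (gconj g y).
Proof. unfold gconj. gsimpl. reflexivity. Qed.

Lemma gconj_comp {G : group} (g h x : G) : gconj (gmul g h) x = gconj g (gconj h x).
Proof. unfold gconj. gsimpl. reflexivity. Qed.

Lemma gconj_one {G : group} (x : G) : gconj gone x = x.
Proof. unfold gconj. gsimpl. reflexivity. Qed.

Lemma hom_one {G H : group} (f : hom G H) : f gone = gone.
Proof. apply (gmul_cancel_l (f gone)). rewrite <- hmulP, gmul1, gmul_one_r. reflexivity. Qed.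

Lemma hom_inv {G H : group} (f : hom G H) (x : G) : f (ginv x) = ginv (f x).
Proof. symmetry. apply ginv_unique. rewrite <- hmulP, gmul_inv_r. apply hom_one. Qed.

Lemma hom_comm {G H : group} (f : hom G H) (x y : G) : f (comm x y) = comm (f x) (f y).
Proof. unfold comm. rewrite !hmulP, !hom_inv. reflexivity. Qed.

Lemma hom_gconj {G H : group} (f : hom G H) (g x : G) : f (gconj g x) = gconj (f g) (f x).
Proof. unfold gconj. rewrite !hmulP, hom_inv. reflexivity. Qed.

Lemma sig_eq {A : Type} {P : A -> Prop} (a b : {x | P x}) : proj1_sig a = proj1_sig b -> a = b.
Proof. apply eq_sig_hprop. intros; apply proof_irrelevance. Qed.

Lemma gen_min {G : group} (S P : G -> Prop) :
  (forall x, S x -> P x) -> P gone -> (forall x y, P x -> P y -> P (gmul x y)) ->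
  (forall x, P x -> P (ginv x)) -> forall x, gen S x -> P x.
Proof. intros HS H1 HM HI x Hx. induction Hx; auto. Qed.

Lemma derived_succ_trivial {G : group} k :
  (forall x y : G, derived k x -> derived k y -> gmul x y = gmul y x) ->
  forall z : G, derived (S k) z -> z = gone.
Proof.
  intros Hc. apply gen_min.
  - intros z (x & y & Hx & Hy & ->). apply comm_trivial, Hc; assumption.
  - reflexivity.
  - intros x y -> ->. apply gmul1.
  - intros x ->. apply ginv_one.
Qed.

Lemma n_solvable_succ {m} {G : group} : n_solvable m G -> n_solvable (S m) G.
Proof.
  intro HG. unfold n_solvable. apply derived_succ_trivial.
  intros x y Hx Hy. rewrite (HG x Hx), (HG y Hy). reflexivity.
Qed.

Lemma n_solvable_le {m n} {G : group} : m <= n -> n_solvable m G -> n_solvable n G.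
Proof. induction 1; auto using n_solvable_succ. Qed.

Lemma abelian_1_solvable {G : group} : abelian G -> n_solvable 1 G.
Proof. intro HG. unfold n_solvable. apply derived_succ_trivial. intros x y _ _. apply HG. Qed.

Lemma hom_derived {G H : group} (f : hom G H) k x : derived k x -> derived k (f x).
Proof.
  revert x. induction k as [|k IH]; simpl; auto.
  apply gen_min.
  - intros z (a & b & Ha & Hb & ->). apply gen_in. exists (f a), (f b). rewrite hom_comm. auto.
  - rewrite hom_one. apply gen_one.
  - intros x y Hx Hy. rewrite hmulP. apply gen_mul; assumption.
  - intros x Hx. rewrite hom_inv. apply gen_inv; assumption.
Qed.

Lemma derived_surj {G H : group} (f : hom G H) : Surjective f ->
  forall k y, derived k y -> exists x, derived k x /\ f x = y.
Proof.
  intros Hf k. induction k as [|k IH]; simpl.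
  - intros y _. destruct (Hf y) as [x Hx]. exists x; auto.
  - apply gen_min.
    + intros z (a & b & Ha & Hb & ->).
      destruct (IH a Ha) as (a' & Ha' & <-), (IH b Hb) as (b' & Hb' & <-).
      exists (comm a' b'). split; [apply gen_in; exists a', b'; auto | apply hom_comm].
    + exists gone. split; [apply gen_one | apply hom_one].
    + intros y1 y2 (x1 & H1 & <-) (x2 & H2 & <-).
      exists (gmul x1 x2). split; [apply gen_mul; assumption | apply hmulP].
    + intros y (x & Hx & <-). exists (ginv x). split; [apply gen_inv; assumption | apply hom_inv].
Qed.

Lemma n_solvable_surj {n} {G H : group} {f : hom G H} : Surjective f ->
  n_solvable n G -> n_solvable n H.
Proof.
  intros Hf HG y Hy. destruct (derived_surj f Hf n y Hy) as (x & Hx & <-).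
  rewrite (HG x Hx). apply hom_one.
Qed.

Lemma n_solvable_of_injective_pair {n} {G H1 H2 : group} (f1 : hom G H1) (f2 : hom G H2) :
  n_solvable n H1 -> n_solvable n H2 ->
  (forall x, f1 x = gone -> f2 x = gone -> x = gone) -> n_solvable n G.
Proof. intros S1 S2 Hi x Hx. apply Hi; [apply S1 | apply S2]; apply hom_derived; assumption. Qed.

(** * Subgroups, monomorphisms and kernels *)

Definition subgroup (G : group) (P : G -> Prop) (H1 : P gone)
  (HM : forall x y, P x -> P y -> P (gmul x y)) (HI : forall x, P x -> P (ginv x)) : group.
Proof.
  refine (@Group {x | P x}
    (fun a b => exist _ (gmul (proj1_sig a) (proj1_sig b)) (HM _ _ (proj2_sig a) (proj2_sig b)))
    (exist _ gone H1) (fun a => exist _ (ginv (proj1_sig a)) (HI _ (proj2_sig a))) _ _ _);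
  intros; apply sig_eq; simpl; [apply gassoc | apply gmul1 | apply gmulV].
Defined.

Definition incl {G : group} {P : G -> Prop} {H1 HM HI} : hom (@subgroup G P H1 HM HI) G :=
  @Hom (@subgroup G P H1 HM HI) G (fun a => proj1_sig a) (fun _ _ => eq_refl).

Lemma incl_injective {G : group} {P : G -> Prop} {H1 HM HI} :
  Injective (@incl G P H1 HM HI).
Proof. intros a b. apply sig_eq. Qed.

Lemma subgroup_n_solvable {n G P H1 HM HI} :
  n_solvable n G -> n_solvable n (@subgroup G P H1 HM HI).
Proof.
  intro HG. apply (n_solvable_of_injective_pair incl incl HG HG).
  intros x Hx _. apply sig_eq. exact Hx.
Qed.

Definition prodg (G H : group) : group.
Proof.
  refine (@Group (G * H)%type (fun a b => (gmul (fst a) (fst b), gmul (snd a) (snd b)))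
    (gone, gone) (fun a => (ginv (fst a), ginv (snd a))) _ _ _);
  intros; simpl; [rewrite !gassoc | rewrite !gmul1; destruct x | rewrite !gmulV]; reflexivity.
Defined.

Definition pr1h {G H : group} : hom (prodg G H) G := @Hom (prodg G H) G fst (fun _ _ => eq_refl).
Definition pr2h {G H : group} : hom (prodg G H) H := @Hom (prodg G H) H snd (fun _ _ => eq_refl).

Lemma prodg_n_solvable {n G H} : n_solvable n G -> n_solvable n H -> n_solvable n (prodg G H).
Proof.
  intros HG HH. apply (n_solvable_of_injective_pair pr1h pr2h HG HH).
  intros [a b]; simpl; intros -> ->; reflexivity.
Qed.

Definition kernel_pair {G H : group} (f : hom G H) : group.
Proof.
  refine (@subgroup (prodg G G) (fun p => f (fst p) = f (snd p)) _ _ _); simpl.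
  - reflexivity.
  - intros x y Hx Hy. rewrite !hmulP, Hx, Hy. reflexivity.
  - intros x Hx. rewrite !hom_inv, Hx. reflexivity.
Defined.

Definition kernel_pair_obj {n} {G H : obj n} (f : hom G H) : obj n :=
  @Obj n (kernel_pair f) (subgroup_n_solvable (prodg_n_solvable (@osolv n G) (@osolv n G))).

Lemma mono_injective {n} {W Y : obj n} {f : hom W Y} : is_mono f -> Injective f.
Proof.
  intros Hm x y Hxy.
  set (KP := kernel_pair_obj f).
  assert (Hp : heq (hcomp f (hcomp pr1h (incl : hom KP _)))
                   (hcomp f (hcomp pr2h (incl : hom KP _))))
    by (intros [[a b] Hab]; exact Hab).
  exact (Hm KP _ _ Hp (exist _ (x, y) Hxy)).
Qed.

Lemma injective_mono {n} {W Y : obj n} {f : hom W Y} : Injective f -> is_mono f.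
Proof. intros Hi T g h H t. apply Hi, H. Qed.

Lemma kernel_mono {n} {K A B : obj n} {k : hom K A} {p : hom A B} : is_kernel k p -> is_mono k.
Proof.
  intros [H0 H1] T g h Hgh.
  assert (Hz : heq (hcomp p (hcomp k g)) (hzero T B)) by (intro t; apply H0).
  destruct (H1 T (hcomp k g) Hz) as [w [_ Hu]].
  intro t. rewrite (Hu g (fun _ => eq_refl) t), (Hu h (fun t => eq_sym (Hgh t)) t). reflexivity.
Qed.

Lemma kernel_injective {n} {K A B : obj n} {k : hom K A} {p : hom A B} :
  is_kernel k p -> Injective k.
Proof. intro H. eapply mono_injective, kernel_mono, H. Qed.

Definition kernel_group {A B : group} (p : hom A B) : group.
Proof.
  refine (@subgroup A (fun z => p z = gone) _ _ _).
  - apply hom_one.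
  - intros x y Hx Hy. rewrite hmulP, Hx, Hy. apply gmul1.
  - intros x Hx. rewrite hom_inv, Hx. apply ginv_one.
Defined.

Lemma kernel_surj {n} {K A B : obj n} {k : hom K A} {p : hom A B} :
  is_kernel k p -> forall z, p z = gone -> exists y, k y = z.
Proof.
  intros [_ H1] z Hz.
  set (KO := @Obj n (kernel_group p) (subgroup_n_solvable (@osolv n A))).
  assert (Hg : heq (hcomp p (incl : hom KO A)) (hzero KO B)) by (intros [a Ha]; exact Ha).
  destruct (H1 KO _ Hg) as [w [Hw _]].
  exists (w (exist _ z Hz)). apply (Hw (exist _ z Hz)).
Qed.

Lemma hom_lift_injective {T K G : group} (k : hom K G) (g : hom T G) :
  Injective k -> (forall t, exists x, k x = g t) -> exists w : hom T K, forall t, k (w t) = g t.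
Proof.
  intros Hk Hg. destruct (choice _ Hg) as [w Hw].
  assert (Hwm : forall x y, w (gmul x y) = gmul (w x) (w y))
    by (intros x y; apply Hk; rewrite hmulP, !Hw; apply hmulP).
  exists (Hom Hwm). exact Hw.
Qed.

(** * Actions, semidirect products and split extensions *)

Record action (X B : group) := Action {
  act :> B -> X -> X;
  act_morph : forall b x y, act b (gmul x y) = gmul (act b x) (act b y);
  act_mul : forall b c x, act (gmul b c) x = act b (act c x);
  act_one : forall x, act gone x = x }.
Arguments act {X B} _ _ _.
Arguments act_morph {X B}.
Arguments act_mul {X B}.
Arguments act_one {X B}.

Lemma act_gone {X B : group} (phi : action X B) b : phi b gone = gone.
Proof.
  apply (gmul_cancel_l (phi b gone)). rewrite <- act_morph, gmul1, gmul_one_r. reflexivity.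
Qed.

Definition SD {X B : group} (phi : action X B) : group.
Proof.
  refine (@Group (X * B)%type
    (fun p q => (gmul (fst p) (phi (snd p) (fst q)), gmul (snd p) (snd q)))
    (gone, gone) (fun p => (phi (ginv (snd p)) (ginv (fst p)), ginv (snd p))) _ _ _).
  - intros [x b] [y c] [z d]; simpl. rewrite act_morph, act_mul, !gassoc. reflexivity.
  - intros [x b]; simpl. rewrite act_one, !gmul1. reflexivity.
  - intros [x b]; simpl. rewrite <- act_morph, !gmulV, act_gone. reflexivity.
Defined.

Section SemidirectProduct.
Context {X B : group} (phi : action X B).

Definition sdk : hom X (SD phi).
Proof.
  refine (@Hom X (SD phi) (fun x => (x, gone)) _).
  intros x y; simpl. rewrite act_one, gmul1. reflexivity.
Defined.

Definition sda : hom (SD phi) B := @Hom (SD phi) B snd (fun _ _ => eq_refl).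

Definition sdb : hom B (SD phi).
Proof.
  refine (@Hom B (SD phi) (fun b => (gone, b)) _).
  intros b c; simpl. rewrite act_gone, gmul1. reflexivity.
Defined.

Lemma sd_gconj b x : gconj (sdb b) (sdk x) = sdk (phi b x).
Proof.
  unfold gconj. simpl. rewrite ginv_one, !act_gone, !gmul1, !gmul_one_r, gmul_inv_r. reflexivity.
Qed.

Lemma SD_n_solvable {d} : abelian X -> n_solvable d B -> n_solvable (S d) (SD phi).
Proof.
  intros HX HB. unfold n_solvable. apply derived_succ_trivial.
  intros p q Hp Hq.
  pose proof (HB _ (hom_derived sda d p Hp)) as Ep.
  pose proof (HB _ (hom_derived sda d q Hq)) as Eq.
  destruct p as [x b], q as [y c]; simpl in Ep, Eq; subst; simpl.
  rewrite !act_one, HX. reflexivity.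
Qed.

End SemidirectProduct.

Section SplitSemidirect.
Context {n : nat} {X B : obj n}.

Lemma SD_is_kernel (phi : action X B) (HS : n_solvable n (SD phi)) :
  @is_kernel n X (Obj HS) B (sdk phi) (sda phi).
Proof.
  split; [intro x; reflexivity |].
  intros T g Hg.
  assert (Hs : forall t, snd (g t) = gone) by exact Hg.
  assert (Hw : forall x y, fst (g (gmul x y)) = gmul (fst (g x)) (fst (g y)))
    by (intros x y; rewrite (hmulP g); simpl; rewrite Hs, act_one; reflexivity).
  exists (Hom Hw). split.
  - intro t; simpl. apply injective_projections; simpl; [reflexivity | symmetry; apply Hs].
  - intros w' Hw' t. specialize (Hw' t). simpl in Hw' |- *. rewrite <- Hw'. reflexivity.
Qed.

Definition SDext (phi : action X B) (HS : n_solvable n (SD phi)) : splext X B :=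
  @SplExt n X B (Obj HS) (sdk phi) (sda phi) (sdb phi) (SD_is_kernel phi HS) (fun _ => eq_refl).

End SplitSemidirect.

Definition sd_map {X B B' : group} (phi : action X B) (phi' : action X B') (h : hom B' B)
  (Hh : forall b x, phi' b x = phi (h b) x) : hom (SD phi') (SD phi).
Proof.
  refine (@Hom (SD phi') (SD phi) (fun p => (fst p, h (snd p))) _).
  intros [x b] [y c]; simpl. rewrite Hh, hmulP. reflexivity.
Defined.

Lemma sd_map_surj {X B B' : group} (phi : action X B) (phi' : action X B') (h : hom B' B) Hh :
  Surjective h -> Surjective (sd_map phi phi' h Hh).
Proof. intros Hs [x b]. destruct (Hs b) as [b' <-]. exists (x, b'). reflexivity. Qed.

Lemma SD_pullback {n} {X B B' : obj n} {phi : action X B} {phi' : action X B'} {h : hom B' B}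
  (Hh : forall b x, phi' b x = phi (h b) x) HS HS' :
  is_pullback_splext h (SDext phi HS) (SDext phi' HS').
Proof.
  exists (sd_map phi phi' h Hh). split; [|split; [|split]].
  - intro p; reflexivity.
  - intro x; simpl. rewrite (hom_one h). reflexivity.
  - intro b; reflexivity.
  - intros T u v Huv.
    assert (Hs : forall t, snd (u t) = h (v t)) by exact Huv.
    assert (Hw : forall x y, ((fst (u (gmul x y)), v (gmul x y)) : SD phi') =
       gmul ((fst (u x), v x) : SD phi') ((fst (u y), v y) : SD phi'))
      by (intros x y; simpl; rewrite (hmulP u), (hmulP v); simpl; rewrite Hh, Hs; reflexivity).
    exists (Hom Hw). split; [|split].
    + intro t; simpl. apply injective_projections; simpl; [reflexivity | symmetry; apply Hs].
    + intro t; reflexivity.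
    + intros w' H1 H2 t; simpl in H1, H2 |- *.
      rewrite <- H1, <- H2. apply injective_projections; reflexivity.
Qed.

Section SplitExtension.
Context {n : nat} {X B : obj n} (E : splext X B).

Lemma sk_injective : Injective (sk E).
Proof. exact (kernel_injective (sk_ker E)). Qed.

Lemma sa_sk x : sa E (sk E x) = gone.
Proof. apply (proj1 (sk_ker E)). Qed.

Lemma sa_sb b : sa E (sb E b) = b.
Proof. apply (sab E). Qed.

(* A junk value unless [sa E z = gone]. *)
Definition kinv (z : sA E) : X := epsilon (inhabits gone) (fun y => sk E y = z).

Lemma sk_kinv z : sa E z = gone -> sk E (kinv z) = z.
Proof. intro Hz. apply (epsilon_spec _ (fun y => sk E y = z)), (kernel_surj (sk_ker E)), Hz. Qed.

Lemma kinv_sk x : kinv (sk E x) = x.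
Proof. apply sk_injective, sk_kinv, sa_sk. Qed.

Lemma sa_gconj_sk b x : sa E (gconj (sb E b) (sk E x)) = gone.
Proof. rewrite hom_gconj, sa_sk. unfold gconj. gsimpl. reflexivity. Qed.

Definition splext_act (b : B) (x : X) : X := kinv (gconj (sb E b) (sk E x)).

Lemma sk_splext_act b x : sk E (splext_act b x) = gconj (sb E b) (sk E x).
Proof. apply sk_kinv, sa_gconj_sk. Qed.

Definition splext_action : action X B.
Proof.
  refine (@Action X B splext_act _ _ _); intros; apply sk_injective.
  - rewrite hmulP, !sk_splext_act, hmulP. apply gconj_mul.
  - rewrite !sk_splext_act, hmulP, gconj_comp. reflexivity.
  - rewrite sk_splext_act, hom_one. apply gconj_one.
Defined.

Lemma splext_decomp z : exists y, z = gmul (sk E y) (sb E (sa E z)).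
Proof.
  destruct (kernel_surj (sk_ker E) (gmul z (ginv (sb E (sa E z))))) as [y Hy].
  - rewrite hmulP, hom_inv, sa_sb. apply gmul_inv_r.
  - exists y. rewrite Hy. gsimpl. reflexivity.
Qed.

End SplitExtension.

Lemma splmor_act {n} {X B B' : obj n} {E : splext X B} {E' : splext X B'} (h : splmor E E') b x :
  splext_act E' (mB h b) x = splext_act E b x.
Proof.
  assert (Hk : forall y, mA h (sk E y) = sk E' y) by exact (mk h).
  assert (Hb : mA h (sb E b) = sb E' (mB h b)) by exact (mb h b).
  apply (sk_injective E').
  rewrite sk_splext_act, <- Hb, <- Hk, <- hom_gconj, <- sk_splext_act. apply Hk.
Qed.

Lemma splmor_mA_eq {n} {X B B' : obj n} {E : splext X B} {E' : splext X B'} (f g : splmor E E') :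
  heq (mB f) (mB g) -> heq (mA f) (mA g).
Proof.
  intros HB z. destruct (splext_decomp E z) as [y ->].
  assert (Hk : forall h : splmor E E', mA h (sk E y) = sk E' y) by (intro h; exact (mk h y)).
  assert (Hb : forall (h : splmor E E') b, mA h (sb E b) = sb E' (mB h b))
    by (intros h b; exact (mb h b)).
  rewrite !hmulP, !Hk, !Hb, HB. reflexivity.
Qed.

Definition faithful_action {X B : group} (phi : action X B) : Prop :=
  forall b b' : B, (forall x, phi b x = phi b' x) -> b = b'.

Lemma faithful_action_splext {n} {X B : obj n} (E : splext X B) :
  faithful_action (splext_action E) -> faithful_splext E.
Proof.
  intros Hf B0 E0 f g.
  assert (HB : heq (mB f) (mB g))
    by (intro b; apply Hf; intro x; simpl; rewrite !splmor_act; reflexivity).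
  split; [apply splmor_mA_eq |]; exact HB.
Qed.

Lemma SDext_act {n} {X B : obj n} (phi : action X B) HS b x :
  splext_act (SDext phi HS) b x = phi b x.
Proof. apply (sk_injective (SDext phi HS)). rewrite sk_splext_act. apply sd_gconj. Qed.

Lemma splext_iso_act {n} {X B : obj n} {E E' : splext X B} :
  splext_iso E E' -> forall b x, splext_act E b x = splext_act E' b x.
Proof.
  intros (u & _ & _ & _ & Hk & Ha & Hb) b x.
  symmetry. exact (splmor_act (@SplMor n X B B E E' u (hid B) Hk Ha Hb) b x).
Qed.

(** * Action accessibility *)

Section ActionImage.
Context {X B : group} (phi : action X B).

Lemma act_image_comp_closed {s t : X -> X} :
  (exists b, s = phi b) -> (exists c, t = phi c) -> exists d, (fun x => s (t x)) = phi d.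
Proof.
  intros [b ->] [c ->]. exists (gmul b c).
  apply functional_extensionality. intro x. symmetry. apply act_mul.
Qed.

Lemma act_image_id_closed : exists b, (fun x : X => x) = phi b.
Proof. exists gone. apply functional_extensionality. intro x. symmetry. apply act_one. Qed.

Definition act_image_rep (t : {t : X -> X | exists b, t = phi b}) : B :=
  proj1_sig (constructive_indefinite_description _ (proj2_sig t)).

Lemma act_image_repE t : proj1_sig t = phi (act_image_rep t).
Proof. exact (proj2_sig (constructive_indefinite_description _ (proj2_sig t))). Qed.

(* The image of [B] in [X -> X], i.e. [B] modulo the kernel of [phi]; inverses are
   computed through a chosen preimage. *)
Definition act_image : group.
Proof.
  refine (@Group {t : X -> X | exists b, t = phi b}
    (fun s t => exist _ (fun x => proj1_sig s (proj1_sig t x))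
                  (act_image_comp_closed (proj2_sig s) (proj2_sig t)))
    (exist _ (fun x => x) act_image_id_closed)
    (fun t => exist _ (phi (ginv (act_image_rep t))) (ex_intro _ _ eq_refl)) _ _ _);
  intros; apply sig_eq; try reflexivity; simpl.
  rewrite act_image_repE. apply functional_extensionality. intro y.
  rewrite <- act_mul, gmulV. apply act_one.
Defined.

Definition act_image_proj : hom B act_image.
Proof.
  refine (@Hom B act_image (fun b => exist _ (phi b) (ex_intro _ b eq_refl)) _).
  intros b c. apply sig_eq, functional_extensionality. intro x. apply act_mul.
Defined.

Lemma act_image_proj_surj : Surjective act_image_proj.
Proof. intro t. exists (act_image_rep t). apply sig_eq. symmetry. apply act_image_repE. Qed.

Definition act_image_action : action X act_image.
Proof.
  refine (@Action X act_image (fun t x => proj1_sig t x) _ _ _); try reflexivity.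
  intros [t [b ->]] x y. apply act_morph.
Defined.

Lemma act_image_faithful : faithful_action act_image_action.
Proof. intros s t H. apply sig_eq, functional_extensionality, H. Qed.

End ActionImage.

Section FaithfulImage.
Context {n : nat} {X B : obj n} (E : splext X B).

Definition kpart (z : sA E) : X := kinv E (gmul z (ginv (sb E (sa E z)))).

Lemma sk_kpart z : sk E (kpart z) = gmul z (ginv (sb E (sa E z))).
Proof. apply sk_kinv. rewrite hmulP, hom_inv, sa_sb. apply gmul_inv_r. Qed.

Definition splext_to_SD : hom (sA E) (SD (splext_action E)).
Proof.
  refine (@Hom (sA E) (SD (splext_action E)) (fun z => (kpart z, sa E z)) _).
  intros z z'. simpl. f_equal; [| apply hmulP].
  apply (sk_injective E). rewrite hmulP, sk_splext_act, !sk_kpart.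
  unfold gconj. rewrite !hmulP. gsimpl. reflexivity.
Defined.

Lemma splext_to_SD_surj : Surjective splext_to_SD.
Proof.
  intros [x b]. exists (gmul (sk E x) (sb E b)). simpl.
  assert (Ha : sa E (gmul (sk E x) (sb E b)) = b) by (rewrite hmulP, sa_sk, sa_sb; apply gmul1).
  unfold kpart. rewrite Ha. gsimpl. rewrite kinv_sk. reflexivity.
Qed.

Definition image_obj : obj n :=
  Obj (n_solvable_surj (act_image_proj_surj (splext_action E)) (@osolv n B)).

Let image_action : action X image_obj := act_image_action (splext_action E).

Lemma SD_image_n_solvable : n_solvable n (SD image_action).
Proof.
  apply (n_solvable_surj (sd_map_surj image_action (splext_action E) (act_image_proj _)
    (fun _ _ => eq_refl) (act_image_proj_surj _))).
  exact (n_solvable_surj splext_to_SD_surj (@osolv n (sA E))).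
Qed.

Definition splext_faithful_image : splext X image_obj := SDext image_action SD_image_n_solvable.

Definition to_splext_faithful_image : splmor E splext_faithful_image.
Proof.
  refine (@SplMor n X B image_obj E splext_faithful_image
    (hcomp (sd_map image_action _ (act_image_proj _) (fun _ _ => eq_refl)) splext_to_SD)
    (act_image_proj _) _ _ _); intro;
    cbn [hfun hcomp sd_map splext_to_SD fst snd]; try reflexivity; unfold kpart.
  - rewrite sa_sk, (hom_one (sb E)), ginv_one, gmul_one_r, kinv_sk.
    apply injective_projections; [reflexivity | apply hom_one].
  - rewrite sa_sb, gmul_inv_r, <- (hom_one (sk E)), kinv_sk. reflexivity.
Defined.

Lemma splext_faithful_image_faithful : faithful_splext splext_faithful_image.
Proof.
  apply faithful_action_splext. intros s t H. apply act_image_faithful. intro x.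
  rewrite <- !(SDext_act image_action SD_image_n_solvable). apply H.
Qed.

End FaithfulImage.

Theorem action_accessible_all n : action_accessible n.
Proof.
  intros X B E. exists (image_obj E), (splext_faithful_image E). split.
  - apply splext_faithful_image_faithful.
  - constructor. exact (to_splext_faithful_image E).
Qed.

(** * Normalizers *)

Record is_normal {G : group} (R : G -> Prop) : Prop := {
  normal_one : R gone;
  normal_mul : forall x y, R x -> R y -> R (gmul x y);
  normal_inv : forall x, R x -> R (ginv x);
  normal_conj : forall g x, R x -> R (gconj g x) }.
Arguments normal_one {G R}.
Arguments normal_mul {G R}.
Arguments normal_inv {G R}.
Arguments normal_conj {G R}.

Section Quotient.
Context {G : group} {R : G -> Prop} (HR : is_normal R).

Definition qrel (x y : G) : Prop := R (gmul (ginv x) y).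

Lemma qrel_refl x : qrel x x.
Proof. unfold qrel. rewrite gmulV. apply (normal_one HR). Qed.

Lemma qrel_sym {x y} : qrel x y -> qrel y x.
Proof. unfold qrel. intro H. apply (normal_inv HR) in H. gsimpl_in H. exact H. Qed.

Lemma qrel_trans {x y z} : qrel x y -> qrel y z -> qrel x z.
Proof.
  unfold qrel. intros H1 H2. pose proof (normal_mul HR _ _ H1 H2) as H. gsimpl_in H. exact H.
Qed.

Lemma qrel_mul_l x {y y'} : qrel y y' -> qrel (gmul x y) (gmul x y').
Proof. unfold qrel. intro H. gsimpl. exact H. Qed.

Lemma qrel_mul_r {x x'} y : qrel x x' -> qrel (gmul x y) (gmul x' y).
Proof.
  unfold qrel. intro H. apply (normal_conj HR (ginv y)) in H. unfold gconj in H.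
  gsimpl_in H. gsimpl. exact H.
Qed.

Definition qrep (x : G) : G := epsilon (inhabits gone) (fun z => qrel z x).

Lemma qrep_rel x : qrel (qrep x) x.
Proof. apply (epsilon_spec _ (fun z => qrel z x)). exists x. apply qrel_refl. Qed.

Lemma qrep_eq {x y} : qrel x y -> qrep x = qrep y.
Proof.
  intro H. unfold qrep. f_equal. apply functional_extensionality; intro z.
  apply propositional_extensionality. split; intro H'.
  - exact (qrel_trans H' H).
  - exact (qrel_trans H' (qrel_sym H)).
Qed.

Lemma qrep_idem x : qrep (qrep x) = qrep x.
Proof. apply qrep_eq, qrep_rel. Qed.

(* Cosets are represented by the fixed points of a choice of coset representatives. *)
Definition quotient : group.
Proof.
  refine (@Group {x : G | qrep x = x}
    (fun a b => exist _ (qrep (gmul (proj1_sig a) (proj1_sig b))) (qrep_idem _))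
    (exist _ (qrep gone) (qrep_idem _))
    (fun a => exist _ (qrep (ginv (proj1_sig a))) (qrep_idem _)) _ _ _).
  - intros [x Hx] [y Hy] [z Hz]. apply sig_eq; simpl.
    rewrite (qrep_eq (qrel_mul_l x (qrep_rel (gmul y z)))),
      (qrep_eq (qrel_mul_r z (qrep_rel (gmul x y)))), gassoc.
    reflexivity.
  - intros [x Hx]. apply sig_eq; simpl.
    rewrite (qrep_eq (qrel_mul_r x (qrep_rel gone))), gmul1. exact Hx.
  - intros [x Hx]. apply sig_eq; simpl.
    rewrite (qrep_eq (qrel_mul_r x (qrep_rel (ginv x)))), gmulV. reflexivity.
Defined.

Definition qproj : hom G quotient.
Proof.
  refine (@Hom G quotient (fun x => exist _ (qrep x) (qrep_idem x)) _).
  intros x y. apply sig_eq; simpl.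
  rewrite (qrep_eq (qrel_mul_r _ (qrep_rel x))), (qrep_eq (qrel_mul_l x (qrep_rel y))).
  reflexivity.
Defined.

Lemma qproj_surj : Surjective qproj.
Proof. intros [x Hx]. exists x. apply sig_eq. exact Hx. Qed.

Lemma qproj_eq_one x : qproj x = gone <-> R x.
Proof.
  split.
  - intro H. apply (f_equal (@proj1_sig _ _)) in H. simpl in H.
    assert (H1 : qrel x gone).
    { apply (qrel_trans (y := qrep x)); [apply qrel_sym, qrep_rel |].
      rewrite H. apply qrep_rel. }
    unfold qrel in H1. rewrite gmul_one_r in H1. apply (normal_inv HR) in H1.
    rewrite ginvK in H1. exact H1.
  - intro H. apply sig_eq; simpl. apply qrep_eq. unfold qrel. rewrite gmul_one_r.
    apply (normal_inv HR), H.
Qed.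

End Quotient.

Definition quotient_obj {n} {G : obj n} {R : G -> Prop} (HR : is_normal R) : obj n :=
  Obj (n_solvable_surj (qproj_surj HR) (@osolv n G)).

Lemma qproj_kernel {n} {K G : obj n} (k : hom K G) (HR : is_normal (fun g => exists x, k x = g)) :
  Injective k -> @is_kernel n K G (quotient_obj HR) k (qproj HR).
Proof.
  intros Hk. split.
  - intro x. apply (qproj_eq_one HR). exists x. reflexivity.
  - intros T g Hg. destruct (hom_lift_injective k g Hk) as [w Hw].
    + intro t. apply (qproj_eq_one HR), Hg.
    + exists w. split; [exact Hw |]. intros w' Hw' t. apply Hk. rewrite Hw. apply Hw'.
Qed.

Section Normalizer.
Context {W Y : group} (f : hom W Y).

Definition normalizes (y : Y) : Prop :=
  forall w, (exists w', gconj y (f w) = f w') /\ (exists w', gconj (ginv y) (f w) = f w').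

Lemma normalizes_one : normalizes gone.
Proof. intro w. rewrite ginv_one, gconj_one. split; exists w; reflexivity. Qed.

Lemma normalizes_mul x y : normalizes x -> normalizes y -> normalizes (gmul x y).
Proof.
  intros Hx Hy w. split.
  - rewrite gconj_comp. destruct (proj1 (Hy w)) as [w1 ->]. apply (proj1 (Hx w1)).
  - rewrite ginv_mul, gconj_comp. destruct (proj2 (Hx w)) as [w1 ->]. apply (proj2 (Hy w1)).
Qed.

Lemma normalizes_inv x : normalizes x -> normalizes (ginv x).
Proof. intros Hx w. rewrite ginvK. split; [apply (proj2 (Hx w)) | apply (proj1 (Hx w))]. Qed.

Definition normalizer : group := subgroup Y normalizes normalizes_one normalizes_mul normalizes_inv.

Lemma normalizes_image w : normalizes (f w).
Proof.
  intro v. split; [exists (gconj w v) | exists (gconj (ginv w) v)];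
    rewrite hom_gconj; [| rewrite hom_inv]; reflexivity.
Qed.

Definition to_normalizer : hom W normalizer.
Proof.
  refine (@Hom W normalizer (fun w => exist _ (f w) (normalizes_image w)) _).
  intros x y. apply sig_eq, hmulP.
Defined.

Lemma to_normalizer_injective : Injective f -> Injective to_normalizer.
Proof. intros Hf x y H. apply Hf. exact (f_equal (@proj1_sig _ _) H). Qed.

Lemma image_normal_in_normalizer : is_normal (fun z => exists w, to_normalizer w = z).
Proof.
  constructor.
  - exists gone. apply hom_one.
  - intros a b [w1 <-] [w2 <-]. exists (gmul w1 w2). apply hmulP.
  - intros a [w1 <-]. exists (ginv w1). apply hom_inv.
  - intros [g Hg] a [w1 <-]. destruct (proj1 (Hg w1)) as [w2 Hw2].
    exists w2. apply sig_eq. simpl. rewrite <- Hw2. reflexivity.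
Qed.

End Normalizer.

Lemma normal_mono_conj {n} {K A : obj n} {k : hom K A} :
  is_normal_mono k -> forall a x, exists x', k x' = gconj a (k x).
Proof.
  intros (Z & p & Hk) a x. apply (kernel_surj Hk).
  assert (Hx : p (k x) = gone) by exact (proj1 Hk x).
  rewrite hom_gconj, Hx. unfold gconj. gsimpl. reflexivity.
Qed.

Lemma normalizes_of_normal_factor {n} {W Y N : obj n} {f : hom W Y} {nn : hom W N} {m : hom N Y} :
  is_normal_mono nn -> heq (hcomp m nn) f -> forall y, normalizes f (m y).
Proof.
  intros Hn Hc.
  assert (Hconj : forall y w, exists w', gconj (m y) (f w) = f w').
  { intros y w. destruct (normal_mono_conj Hn y w) as [w' Hw'].
    exists w'. rewrite <- (Hc w), <- (Hc w'). simpl. rewrite Hw', hom_gconj. reflexivity. }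
  intros y w. split; [| rewrite <- hom_inv]; apply Hconj.
Qed.

Definition normalizer_obj {n} {W Y : obj n} (f : hom W Y) : obj n :=
  Obj (subgroup_n_solvable (@osolv n Y) : n_solvable n (normalizer f)).

Theorem admits_normalizers_all n : admits_normalizers n.
Proof.
  intros W Y f Hm.
  exists (normalizer_obj f), (to_normalizer f), incl. split; [| split; [| split]].
  - exists (@quotient_obj n (normalizer_obj f) _ (image_normal_in_normalizer f)), (qproj _).
    apply (@qproj_kernel n W (normalizer_obj f)), to_normalizer_injective, (mono_injective Hm).
  - apply injective_mono, incl_injective.
  - intro w; reflexivity.
  - intros N' nn' m' Hn' _ Hc.
    destruct (hom_lift_injective (incl : hom (normalizer_obj f) Y) m' incl_injective) as [u Hu].
    { intro y. exists (exist _ (m' y) (normalizes_of_normal_factor Hn' Hc y) : normalizer f).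
      reflexivity. }
    exists u. split; [| split].
    + intro w. apply incl_injective. exact (eq_trans (Hu (nn' w)) (Hc w)).
    + exact Hu.
    + intros u' _ Hu' y. apply incl_injective. rewrite Hu. apply Hu'.
Qed.

(** * Failure of weak action representability *)

Definition act_trivial (X B : group) : action X B :=
  @Action X B (fun _ x => x) (fun _ _ _ => eq_refl) (fun _ _ _ => eq_refl) (fun _ => eq_refl).

Definition V : group.
Proof.
  refine (@Group (nat -> bool) (fun x y l => xorb (x l) (y l)) (fun _ => false) (fun x => x) _ _ _);
    intros; apply functional_extensionality; intro l.
  - symmetry; apply xorb_assoc_reverse.
  - reflexivity.
  - apply xorb_nilpotent.
Defined.

Lemma V_abelian : abelian V.
Proof. intros x y. apply functional_extensionality; intro l. apply xorb_comm. Qed.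

Definition C2 : group.
Proof.
  refine (@Group bool xorb false (fun b => b) _ _ _); intros.
  - symmetry; apply xorb_assoc_reverse.
  - reflexivity.
  - apply xorb_nilpotent.
Defined.

Lemma C2_abelian : abelian C2.
Proof. intros x y. apply xorb_comm. Qed.

(* ((a, b), c) stands for the unitriangular matrix [[1, a, c], [0, 1, b], [0, 0, 1]] over F_2. *)
Definition Heis : group.
Proof.
  refine (@Group (bool * bool * bool)%type
    (fun p q => let '((a, b), c) := p in let '((a', b'), c') := q in
       ((xorb a a', xorb b b'), xorb (xorb c c') (a && b')))
    ((false, false), false)
    (fun p => let '((a, b), c) := p in ((a, b), xorb c (a && b))) _ _ _).
  - intros [[[] []] []] [[[] []] []] [[[] []] []]; reflexivity.
  - intros [[[] []] []]; reflexivity.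
  - intros [[[] []] []]; reflexivity.
Defined.

Lemma Heis_2_solvable : n_solvable 2 Heis.
Proof.
  assert (H1 : forall p : Heis, derived 1 p -> fst p = (false, false)).
  { apply gen_min.
    - intros z ([[[] []] []] & [[[] []] []] & _ & _ & ->); reflexivity.
    - reflexivity.
    - intros [[a b] c] [[a' b'] c']; simpl; intros [= -> ->] [= -> ->]; reflexivity.
    - intros [[a b] c]; simpl; intros [= -> ->]; reflexivity. }
  unfold n_solvable. apply derived_succ_trivial.
  intros [[a b] c] [[a' b'] c'] Hp Hq.
  apply H1 in Hp, Hq. simpl in Hp, Hq. injection Hp as -> ->. injection Hq as -> ->.
  destruct c, c'; reflexivity.
Qed.

Definition heis_a : hom C2 Heis :=
  @Hom C2 Heis (fun b => ((b, false), false)) ltac:(intros [] []; reflexivity).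
Definition heis_b : hom C2 Heis :=
  @Hom C2 Heis (fun b => ((false, b), false)) ltac:(intros [] []; reflexivity).
Definition heis_c : hom C2 Heis :=
  @Hom C2 Heis (fun b => ((false, false), b)) ltac:(intros [] []; reflexivity).

Lemma heis_comm_ab : comm (heis_a true) (heis_b true) = heis_c true.
Proof. reflexivity. Qed.

(* [transv i j] adds coordinate [j] to coordinate [i]; for [i = j] it is taken to be the
   identity, so that it is an involution for all [i] and [j]. *)
Definition transv (i j : nat) (x : V) : V :=
  fun l => if (l =? i) && negb (i =? j) then xorb (x i) (x j) else x l.

Ltac V_ext_cases :=
  apply functional_extensionality; intro l; simpl; unfold transv;
  repeat match goal with |- context [?a =? ?b] => destruct (Nat.eqb_spec a b); subst end;
  try congruence; simpl;
  repeat match goal with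
    |- context [?x ?m] => lazymatch type of x with gcar V => destruct (x m) end
  end;
  reflexivity.

Lemma transv_morph i j (x y : V) : transv i j (gmul x y) = gmul (transv i j x) (transv i j y).
Proof. V_ext_cases. Qed.

Lemma transv_involutive i j x : transv i j (transv i j x) = x.
Proof. V_ext_cases. Qed.

Definition transv_action (i j : nat) : action V C2.
Proof.
  refine (@Action V C2 (fun b x => if b then transv i j x else x) _ _ _).
  - intros [] x y; [apply transv_morph | reflexivity].
  - intros [] [] x; simpl; auto using transv_involutive.
  - reflexivity.
Defined.

Definition heis_act (i j k : nat) (g : Heis) (x : V) : V :=
  let '((a, b), c) := g in
  fun l => if l =? i then xorb (x i) (xorb (a && x j) (c && x k))
           else if l =? j then xorb (x j) (b && x k) else x l.

Section HeisAction.
Context (i j k : nat) (Hij : i <> j) (Hjk : j <> k) (Hik : i <> k).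

Definition heis_action : action V Heis.
Proof.
  refine (@Action V Heis (heis_act i j k) _ _ _).
  - intros [[a b] c] x y. destruct a, b, c; V_ext_cases.
  - intros [[a b] c] [[a' b'] c'] x. destruct a, b, c, a', b', c'; V_ext_cases.
  - intros x. V_ext_cases.
Defined.

Lemma heis_action_a b x : transv_action i j b x = heis_action (heis_a b) x.
Proof. destruct b; [V_ext_cases | symmetry; apply (act_one heis_action)]. Qed.

Lemma heis_action_b b x : transv_action j k b x = heis_action (heis_b b) x.
Proof. destruct b; [V_ext_cases | symmetry; apply (act_one heis_action)]. Qed.

Lemma heis_action_c b x : transv_action i k b x = heis_action (heis_c b) x.
Proof. destruct b; [V_ext_cases | symmetry; apply (act_one heis_action)]. Qed.

End HeisAction.

Section NoWeakActionRepresentation.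
Variable n : nat.
Hypothesis Hn : 3 <= n.

Definition V_obj : obj n :=
  Obj (n_solvable_le (m := 1) (n := n) ltac:(lia) (abelian_1_solvable V_abelian)).
Definition C2_obj : obj n :=
  Obj (n_solvable_le (m := 1) (n := n) ltac:(lia) (abelian_1_solvable C2_abelian)).
Definition Heis_obj : obj n :=
  Obj (n_solvable_le (m := 2) (n := n) ltac:(lia) Heis_2_solvable).

Definition C2_ext (phi : action V_obj C2_obj) : splext V_obj C2_obj :=
  SDext phi (n_solvable_le (m := 2) (n := n) ltac:(lia)
               (SD_n_solvable phi V_abelian (abelian_1_solvable C2_abelian))).

Definition Heis_ext (phi : action V_obj Heis_obj) : splext V_obj Heis_obj :=
  SDext phi (n_solvable_le (m := 3) (n := n) Hn (SD_n_solvable phi V_abelian Heis_2_solvable)).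

Variable M : obj n.
Variable tau : forall B : obj n, splext V_obj B -> hom B M.
Hypothesis tau_injective : forall (B : obj n) (E E' : splext V_obj B),
  heq (tau B E) (tau B E') -> splext_iso E E'.
Hypothesis tau_natural : forall (B B' : obj n) (f : hom B' B) (E : splext V_obj B)
  (E' : splext V_obj B'), is_pullback_splext f E E' -> heq (tau B' E') (hcomp (tau B E) f).

Let v (i j : nat) : M := tau C2_obj (C2_ext (transv_action i j)) true.

Lemma v_comm i j k : i <> j -> j <> k -> i <> k -> v i k = comm (v i j) (v j k).
Proof.
  intros Hij Hjk Hik.
  set (EH := Heis_ext (heis_action i j k Hij Hjk Hik)).
  assert (Hpb : forall (e : hom C2 Heis) i' j',
    (forall b x, transv_action i' j' b x = heis_action i j k Hij Hjk Hik (e b) x) ->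
    v i' j' = tau Heis_obj EH (e true)).
  { intros e i' j' He.
    exact (tau_natural _ _ (e : hom C2_obj Heis_obj) EH (C2_ext (transv_action i' j'))
             (@SD_pullback n V_obj Heis_obj C2_obj _ _ e He _ _) true). }
  rewrite (Hpb heis_a i j), (Hpb heis_b j k), (Hpb heis_c i k), <- heis_comm_ab, hom_comm;
    auto using heis_action_a, heis_action_b, heis_action_c.
Qed.

Lemma v_derived k i : derived k (v i (i + 2 ^ k)).
Proof.
  revert i. induction k as [| k IH]; intro i; [exact I |].
  assert (Hk := Nat.pow_nonzero 2 k ltac:(lia)).
  rewrite (v_comm i (i + 2 ^ k) (i + 2 ^ S k)) by (simpl; lia).
  apply gen_in. exists (v i (i + 2 ^ k)), (v (i + 2 ^ k) (i + 2 ^ S k)).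
  split; [apply IH | split; [| reflexivity]].
  replace (i + 2 ^ S k) with (i + 2 ^ k + 2 ^ k) by (simpl; lia). apply IH.
Qed.

Lemma tau_transv_trivial :
  heq (tau C2_obj (C2_ext (transv_action 0 (2 ^ n))))
      (tau C2_obj (C2_ext (act_trivial V_obj C2_obj))).
Proof.
  assert (Hv : v 0 (2 ^ n) = gone) by exact (@osolv n M _ (v_derived n 0)).
  assert (Hpb := tau_natural _ _ (hzero C2_obj C2_obj) (C2_ext (transv_action 0 (2 ^ n)))
    (C2_ext (act_trivial V_obj C2_obj))
    (@SD_pullback n V_obj C2_obj C2_obj (transv_action 0 (2 ^ n)) (act_trivial V_obj C2_obj)
       (hzero C2_obj C2_obj) (fun _ _ => eq_refl) _ _)).
  intro b. rewrite (Hpb b). transitivity (@gone M).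
  - destruct b; [exact Hv | exact (hom_one _)].
  - symmetry. apply hom_one.
Qed.

Lemma no_weak_action_representation : False.
Proof.
  pose proof (splext_iso_act (tau_injective _ _ _ tau_transv_trivial) true (fun l => l =? 2 ^ n))
    as H.
  unfold C2_ext in H. rewrite !SDext_act in H.
  apply (f_equal (fun x : V => x 0)) in H. simpl in H. unfold transv in H.
  assert (HN := Nat.pow_nonzero 2 n ltac:(lia)).
  destruct (2 ^ n) as [| m]; [contradiction |].
  simpl in H. rewrite Nat.eqb_refl in H. discriminate.
Qed.

End NoWeakActionRepresentation.

Theorem not_weakly_action_representable n : 3 <= n -> ~ weakly_action_representable n.
Proof.
  intros Hn W. destruct (W (V_obj n Hn)) as (M & tau & _ & Hinj & Hnat).
  exact (no_weak_action_representation n Hn M tau Hinj Hnat).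
Qed.

Theorem mainTheorem3 (n : nat) (Hn : 3 <= n) :
  action_accessible n /\ admits_normalizers n /\ ~ weakly_action_representable n.
Proof.
  split; [| split].
  - apply action_accessible_all.
  - apply admits_normalizers_all.
  - apply not_weakly_action_representable, Hn.
Qed.
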